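(* Let $\{\ket{j}\}_{j=0}^{7}$ be the computational basis of three qubits, where $\ket{j}=\ket{j_1j_2j_3}$ with $j=4j_1+2j_2+j_3$, and let $$\ket{\psi_3}=\frac{1}{4\sqrt{2}}\left(\ket{0}+\ket{1}+\ket{2}+\ket{3}+\ket{4}+\ket{5}+\ket{6}-5\ket{7}\right),\qquad \rho_3=\ket{\psi_3}\bra{\psi_3}.$$ Denote by $A_3,B_3,C_3$ the first, second and third qubits of $\rho_3$. Then $$D(B_3C_3|A_3)=D(A_3C_3|B_3)=D(A_3B_3|C_3)=D(C_3|A_3B_3)=D(B_3|A_3C_3)=D(A_3|B_3C_3)$$ $$=-\tfrac{1}{16}(8+\sqrt{37})\log\left(\tfrac{1}{16}(8+\sqrt{37})\right)-\tfrac{1}{16}(8-\sqrt{37})\log\left(\tfrac{1}{16}(8-\sqrt{37})\right)\approx 0.52,$$ and moreover $D(B_3C_3|A_3)=S(\rho_{A_3})$ and $D(C_3|A_3B_3)=S(\rho_{A_3B_3})$.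
   Context: Logarithms are base 2, and $S(\sigma)=-\mathrm{Tr}(\sigma\log\sigma)$ is the von Neumann entropy; $\rho_{A_3}$ and $\rho_{A_3B_3}$ denote the reduced states of $\rho_3$ on the first qubit and on the first two qubits. For a state $\rho_{XY}$ on a bipartite system $X\otimes Y$ (here $X$ and $Y$ are complementary groups of the three qubits), the quantum discord with measurement on $X$ is $$D(Y|X)=\min_{\{E_a\}}\sum_a p_a S(\rho_{Y|a})+S(\rho_X)-S(\rho_{XY}),$$ where the minimum is over all POVMs $\{E_a\}$ on $X$ ($E_a\ge 0$, $\sum_a E_a=I$), $p_a=\mathrm{Tr}((E_a\otimes I)\rho_{XY})$, $\rho_{Y|a}=\mathrm{Tr}_X((E_a\otimes I)\rho_{XY})/p_a$, and $\rho_X,\rho_Y$ are reduced states. *)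

From HB Require Import structures.
From mathcomp Require Import all_boot all_order all_algebra.
From mathcomp Require Import complex mxtens.
From mathcomp Require Import classical_sets reals exp.

Set Implicit Arguments.
Unset Strict Implicit.
Unset Printing Implicit Defensive.

Import Order.TTheory GRing.Theory Num.Theory.
Local Open Scope ring_scope.

Section QuantumDiscord.
Variable R : realType.
Local Notation C := R[i].

Definition log2 (x : R) : R := ln x / ln 2.
Definition xlog2x (x : R) : R := if x == 0 then 0 else x * log2 x.

Definition dagger m n (A : 'M[C]_(m, n)) : 'M[C]_(n, m) :=
  (map_mx (fun z : C => Num.conj z) A)^T.

Definition psd n (A : 'M[C]_n) : Prop :=
  forall v : 'cV[C]_n, 0 <= (dagger v *m A *m v) 0 0.

(* eigenvalues (with multiplicity) = roots of the characteristic polynomial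
   over the algebraically closed field R[i] *)
Definition eigenvalues n (A : 'M[C]_n) : seq C :=
  sval (closed_field_poly_normal (char_poly A)).

(* von Neumann entropy S(s) = -Tr(s log s) = - sum_lambda lambda log2 lambda,
   computed through the spectrum (eigenvalues of a density matrix are real) *)
Definition vn_entropy n (A : 'M[C]_n) : R :=
  - \sum_(z <- eigenvalues A) xlog2x (complex.Re z).

(* bipartite system X (x) Y with dim X = p, dim Y = q; the basis vector
   |i>|j> has index i * q + j  (mxtens_index) *)
Definition ptrace_X p q (M : 'M[C]_(p * q)) : 'M[C]_q :=
  \matrix_(j, j') \sum_(i < p) M (mxtens_index (i, j)) (mxtens_index (i, j')).
Definition ptrace_Y p q (M : 'M[C]_(p * q)) : 'M[C]_p :=
  \matrix_(i, i') \sum_(j < q) M (mxtens_index (i, j)) (mxtens_index (i', j)).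

Definition povm p k (E : 'I_k -> 'M[C]_p) : Prop :=
  (forall a, psd (E a)) /\ \sum_(a < k) E a = 1%:M.

Definition meas_op p q (Ea : 'M[C]_p) (rho : 'M[C]_(p * q)) : 'M[C]_(p * q) :=
  (Ea *t (1%:M : 'M[C]_q)) *m rho.
Definition meas_prob p q (Ea : 'M[C]_p) (rho : 'M[C]_(p * q)) : R :=
  complex.Re (\tr (meas_op Ea rho)).
Definition post_state p q (Ea : 'M[C]_p) (rho : 'M[C]_(p * q)) : 'M[C]_q :=
  (real_complex R (meas_prob Ea rho)^-1) *: ptrace_X (meas_op Ea rho).

Definition avg_cond_entropy p q k (E : 'I_k -> 'M[C]_p) (rho : 'M[C]_(p * q)) : R :=
  \sum_(a < k) meas_prob (E a) rho * vn_entropy (post_state (E a) rho).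

(* quantum discord D(Y|X) with measurement on the first factor X;
   the minimum over all (finite-outcome) POVMs is taken as an infimum *)
Definition discord p q (rho : 'M[C]_(p * q)) : R :=
  inf [set x : R | exists (k : nat) (E : 'I_k -> 'M[C]_p),
                     povm E /\ x = avg_cond_entropy E rho]
  + vn_entropy (ptrace_Y rho) - vn_entropy rho.

(* three qubits: index j = 4 j1 + 2 j2 + j3; qubit t (0 = first) of j *)
Definition qbit (j : 'I_8) (t : 'I_3) : bool := odd (j %/ 2 ^ (2 - t)).

(* reorder the qubits: new position t carries old qubit o t *)
Definition reorder (o : 'I_3 -> 'I_3) (rho : 'M[C]_8) : 'M[C]_8 :=
  \matrix_(i, j) \sum_(k < 8) \sum_(l < 8)
     (if [forall t, qbit k (o t) == qbit i t] && [forall t, qbit l (o t) == qbit j t]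
      then rho k l else 0).

Definition qorder (a b c : 'I_3) : 'I_3 -> 'I_3 :=
  fun t => if t == 0 then a else if t == 1 then b else c.

Definition qA : 'I_3 := inord 0.
Definition qB : 'I_3 := inord 1.
Definition qC : 'I_3 := inord 2.

Definition psi3 : 'cV[C]_8 :=
  \col_(j < 8) real_complex R ((if val j == 7%N then -5 else 1) / (4 * Num.sqrt 2)).
Definition rho3 : 'M[C]_8 := psi3 *m dagger psi3.

Definition rho_A3 : 'M[C]_2 := @ptrace_Y 2 4 rho3.
Definition rho_A3B3 : 'M[C]_4 := @ptrace_Y 4 2 rho3.

Definition D_BC_A := @discord 2 4 rho3.
Definition D_AC_B := @discord 2 4 (reorder (qorder qB qA qC) rho3).
Definition D_AB_C := @discord 2 4 (reorder (qorder qC qA qB) rho3).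
Definition D_C_AB := @discord 4 2 rho3.
Definition D_B_AC := @discord 4 2 (reorder (qorder qA qC qB) rho3).
Definition D_A_BC := @discord 4 2 (reorder (qorder qB qC qA) rho3).

Definition lemma3_value : R :=
  - ((8 + Num.sqrt 37) / 16) * log2 ((8 + Num.sqrt 37) / 16)
  - ((8 - Num.sqrt 37) / 16) * log2 ((8 - Num.sqrt 37) / 16).

End QuantumDiscord.

(* rho3 = psi3 psi3^* is pure.  For a pure state every post-measurement
   average sum_a p_a S(rho_{Y|a}) is nonnegative, and measuring X in the
   computational basis leaves Y in pure states, so the infimum is 0 and
   D(Y|X) = S(rho_X) - S(rho) = S(rho_X).  The amplitudes of psi3 only depend on
   whether all three qubits are 1, so rho3 is invariant under every permutation of
   the qubits and the six discords reduce to D(BC|A) = S(rho_A) and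
   D(C|AB) = S(rho_AB).  Both reduced states have trace 1, at most 4 eigenvalues,
   and are annihilated by x (x^2 - x + 27/256), whose nonzero roots are
   (8 +- sqrt 37)/16; the trace condition forces each of these to occur exactly
   once, which gives the stated entropy. *)

From HB Require Import structures.
From mathcomp Require Import all_boot all_order all_algebra.
From mathcomp Require Import complex mxtens.
From mathcomp Require Import classical_sets reals exp.
From mathcomp Require Import ring lra zify.

Set Implicit Arguments.
Unset Strict Implicit.
Unset Printing Implicit Defensive.

Import Order.TTheory GRing.Theory Num.Theory.
Local Open Scope ring_scope.
Local Open Scope complex_scope.

Lemma sum_count_mem (V : nmodType) (T : eqType) (F : T -> V) (s r : seq T) :
  uniq r -> {subset s <= r} -> \sum_(z <- s) F z = \sum_(x <- r) F x *+ count_mem x s.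
Proof.
move=> r_uniq; elim: s => [|x s IHs] sr; first by rewrite big_nil big1.
rewrite big_cons IHs => [|z zs]; last by apply: sr; rewrite inE zs orbT.
under [RHS]eq_bigr => y _ do rewrite /= mulrnDr.
rewrite big_split /=; congr (_ + _).
under eq_bigr => y _ do rewrite eq_sym mulrb.
by rewrite -big_mkcond -big_filter filter_pred1_uniq ?big_seq1 ?sr ?mem_head.
Qed.

Lemma inf_eq_min (R : realType) (S : set R) (x : R) : S x -> lbound S x -> inf S = x.
Proof.
move=> Sx x_lb; apply/eqP; rewrite eq_le lb_le_inf ?andbT //; last by exists x.
by apply: ge_inf => //; exists x.
Qed.

Section Spectrum.
Variable R : realType.
Local Notation C := R[i].

Lemma char_poly_eigenvalues n (A : 'M[C]_n) :
  char_poly A = \prod_(z <- eigenvalues A) ('X - z%:P).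
Proof.
rewrite /eigenvalues; case: (closed_field_poly_normal (char_poly A)) => r /= ->.
by rewrite (monicP (char_poly_monic A)) scale1r.
Qed.

Lemma size_eigenvalues n (A : 'M[C]_n) : size (eigenvalues A) = n.
Proof.
by apply: succn_inj; rewrite -(size_char_poly A) char_poly_eigenvalues size_prod_XsubC.
Qed.

Lemma mem_eigenvalues n (A : 'M[C]_n) z : (z \in eigenvalues A) = eigenvalue A z.
Proof. by rewrite eigenvalue_root_char char_poly_eigenvalues root_prod_XsubC. Qed.

Lemma sum_eigenvalues n (A : 'M[C]_n) : \sum_(z <- eigenvalues A) z = \tr A.
Proof.
case: n A => [|n] A.
  by rewrite (size0nil (size_eigenvalues A)) big_nil /mxtrace big_ord0.
have := char_poly_trace A (ltn0Sn n).
rewrite -[in n.+1.-1](size_eigenvalues A) char_poly_eigenvalues.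
by rewrite coefPn_prod_XsubC ?size_eigenvalues // => /oppr_inj.
Qed.

Lemma eigenvalues_sub_roots n (A : 'M[C]_n.+1) (r : seq C) :
  horner_mx A (\prod_(x <- r) ('X - x%:P)) = 0 -> {subset eigenvalues A <= r}.
Proof.
move=> /mxminpoly_min min_dvd z.
rewrite mem_eigenvalues eigenvalue_root_min -root_prod_XsubC !root_factor_theorem.
by move=> /dvdp_trans; apply.
Qed.

End Spectrum.

Section PositiveSemidefinite.
Variable R : realType.
Local Notation C := R[i].

Lemma daggerK m n (A : 'M[C]_(m, n)) : dagger (dagger A) = A.
Proof. by apply/matrixP => i j; rewrite !mxE conjCK. Qed.

Lemma dagger_mul m n r (A : 'M[C]_(m, n)) (B : 'M[C]_(n, r)) :
  dagger (A *m B) = dagger B *m dagger A.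
Proof. by rewrite /dagger map_mxM trmx_mul. Qed.

Lemma complex_ge0_real (z : C) : 0 <= z -> (complex.Re z)%:C = z /\ 0 <= complex.Re z.
Proof. by move=> z_ge0; have Rez := RRe_real (ger0_real z_ge0); rewrite -ler0c Rez. Qed.

Lemma mulmx_dagger_gt0 n (v : 'rV[C]_n) : v != 0 -> 0 < (v *m dagger v) 0 0.
Proof.
move=> v_neq0; have v_ge0 j : true -> 0 <= v 0 j * dagger v j 0.
  by rewrite !mxE mul_conjC_ge0.
rewrite mxE lt_def sumr_ge0 // andbT; apply: contra v_neq0 => /eqP v_eq0.
apply/eqP/matrixP => i j; rewrite (ord1 i) mxE.
by have := psumr_eq0P v_ge0 v_eq0; move=> /(_ j isT)/eqP; rewrite !mxE mul_conjC_eq0 => /eqP.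
Qed.

Lemma psd_eigenvalue_ge0 n (A : 'M[C]_n) z : psd A -> z \in eigenvalues A -> 0 <= z.
Proof.
rewrite mem_eigenvalues => A_psd /eigenvalueP [v vA v_neq0].
have := A_psd (dagger v); rewrite daggerK vA -scalemxAl mxE.
by rewrite pmulr_lge0 // mulmx_dagger_gt0.
Qed.

Lemma psd_mxtrace_ge0 n (A : 'M[C]_n) : psd A -> 0 <= \tr A.
Proof.
move=> A_psd; rewrite -sum_eigenvalues big_seq; apply: sumr_ge0 => z.
exact: psd_eigenvalue_ge0.
Qed.

Lemma psd_dagger_mul m n (B : 'M[C]_(m, n)) (M : 'M[C]_m) :
  psd M -> psd (dagger B *m M *m B).
Proof. by move=> M_psd v; rewrite !mulmxA -dagger_mul -!mulmxA mulmxA. Qed.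

Lemma psd_trmx n (M : 'M[C]_n) : psd M -> psd M^T.
Proof.
move=> M_psd v; pose w := map_mx Num.conj v.
have -> : dagger v *m M^T *m v = (dagger w *m M *m w)^T.
  rewrite !trmx_mul mulmxA {2}/dagger trmxK; congr (_ *m _).
  by apply/matrixP => i j; rewrite !mxE conjCK.
by rewrite mxE; apply: M_psd.
Qed.

Lemma psd_scale n (M : 'M[C]_n) (c : R) : 0 <= c -> psd M -> psd (c%:C *: M).
Proof.
by move=> c_ge0 M_psd v; rewrite -scalemxAr -scalemxAl mxE mulr_ge0 ?ler0c.
Qed.

Lemma psd_rank1 n (w : 'cV[C]_n) : psd (w *m dagger w).
Proof.
move=> v; rewrite mulmxA -mulmxA.
have -> : dagger w *m v = dagger (dagger v *m w) by rewrite dagger_mul daggerK.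
set x := dagger v *m w.
by rewrite mxE big_ord1 [dagger x _ _]mxE [map_mx _ _ _ _]mxE mul_conjC_ge0.
Qed.

Lemma psd_delta_mx n (a : 'I_n) : psd (delta_mx a a : 'M[C]_n).
Proof.
rewrite -(mul_delta_mx (0 : 'I_1)).
have -> : delta_mx 0 a = dagger (delta_mx a 0 : 'cV[C]_n).
  by apply/matrixP => i j; rewrite !mxE andbC conjC_nat.
exact: psd_rank1.
Qed.

End PositiveSemidefinite.

Section Entropy.
Variable R : realType.
Local Notation C := R[i].

Lemma xlog2x0 : xlog2x (0 : R) = 0.
Proof. by rewrite /xlog2x eqxx. Qed.

Lemma xlog2x1 : xlog2x (1 : R) = 0.
Proof. by rewrite /xlog2x oner_eq0 /log2 ln1 mul0r mulr0. Qed.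

Lemma xlog2x_le0 (x : R) : 0 <= x <= 1 -> xlog2x x <= 0.
Proof.
case/andP=> x_ge0 x_le1; rewrite /xlog2x; case: eqP => // _.
by rewrite mulr_ge0_le0 // mulr_le0_ge0 ?ln_le0 // invr_ge0 ltW // ln_gt0 // ltr1n.
Qed.

Lemma vn_entropy_ge0 n (A : 'M[C]_n) : psd A -> \tr A = 1 -> 0 <= vn_entropy A.
Proof.
move=> A_psd trA; rewrite oppr_ge0 big_seq; apply: sumr_le0 => z zA.
have [Rez Rez_ge0] := complex_ge0_real (psd_eigenvalue_ge0 A_psd zA).
have z_le1 : z <= 1.
  rewrite -trA -sum_eigenvalues (big_rem z) //= lerDl big_seq sumr_ge0 // => y.
  by move=> /mem_rem; apply: psd_eigenvalue_ge0.
by apply: xlog2x_le0; rewrite Rez_ge0 -(@lecR R) Rez.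
Qed.

Section EigenvalueCount.
Variables (n : nat) (A : 'M[C]_n) (r : seq C).
Hypotheses (r_uniq : uniq (0 :: r)) (A_r : {subset eigenvalues A <= 0 :: r}).

Lemma mxtrace_count : \tr A = \sum_(x <- r) x *+ count_mem x (eigenvalues A).
Proof. by rewrite -sum_eigenvalues (sum_count_mem id r_uniq A_r) big_cons mul0rn add0r. Qed.

Lemma vn_entropy_count :
  vn_entropy A = - \sum_(x <- r) xlog2x (complex.Re x) *+ count_mem x (eigenvalues A).
Proof.
by rewrite /vn_entropy (sum_count_mem _ r_uniq A_r) big_cons /= xlog2x0 mul0rn add0r.
Qed.

End EigenvalueCount.

Lemma horner_mx_XsubC2 n (A : 'M[C]_n.+1) a b :
  horner_mx A (\prod_(x <- [:: a; b]) ('X - x%:P)) = A *m A - (a + b) *: A + (a * b)%:M.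
Proof.
rewrite !big_cons big_nil mulr1 rmorphM !rmorphB /= horner_mx_X !horner_mx_C mulmxE.
rewrite mulrBl !mulrBr -!mulmxE -scalar_mxC !mul_scalar_mx !mul_mx_scalar.
rewrite scale_scalar_mx scalerDl opprB opprD !addrA addrAC.
by congr (_ + _); apply: addrAC.
Qed.

Lemma vn_entropy_rank1 n (u : 'cV[C]_n) (w : 'rV[C]_n) :
  vn_entropy (u *m w) = - xlog2x (complex.Re (\tr (u *m w))).
Proof.
case: n u w => [|n] u w.
  rewrite /vn_entropy (size0nil (size_eigenvalues _)) big_nil.
  by rewrite /mxtrace big_ord0 xlog2x0 oppr0.
set A := u *m w; set c := \tr A.
have AA : A *m A = c *: A.
  rewrite /A mulmxA -(mulmxA u) [w *m u]mx11_scalar mul_mx_scalar -scalemxAl.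
  by rewrite /c /A mxtrace_mulC /mxtrace big_ord1.
have A_0c : {subset eigenvalues A <= [:: 0; c]}.
  apply: eigenvalues_sub_roots; rewrite horner_mx_XsubC2 add0r mul0r AA subrr add0r.
  by rewrite -[0%:M]/(scalar_mx 0) raddf0.
have [c0|c_neq0] := eqVneq c 0.
  rewrite c0 (@vn_entropy_count _ _ [::]) ?big_nil ?xlog2x0 // => z /A_0c.
  by rewrite c0 !inE orbb.
have uniq_0c : uniq [:: 0; c] by rewrite /= inE eq_sym c_neq0.
have k1 : count_mem c (eigenvalues A) = 1%N.
  have := mxtrace_count uniq_0c A_0c; rewrite big_seq1 => trA.
  by apply: (mulrIn c_neq0); rewrite -trA mulr1n.
by rewrite (vn_entropy_count uniq_0c A_0c) big_seq1 k1.
Qed.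

(* The roots of x^2 - x + 27/256. *)
Local Notation lp := ((8 + Num.sqrt 37) / 16 : R).
Local Notation lm := ((8 - Num.sqrt 37) / 16 : R).

Lemma sqrt37_bounds : 6 < Num.sqrt (37 : R) < 7.
Proof.
have sq : Num.sqrt (37 : R) ^+ 2 = 37 by rewrite sqr_sqrtr // ler0n.
have sqrt37_ge0 := sqrtr_ge0 (37 : R).
by apply/andP; split; nra.
Qed.

(* ka lp + kb lm = (ka + kb) / 2 + (ka - kb) sqrt 37 / 16, and no ratio
   8 (2 - ka - kb) / (ka - kb) with ka + kb <= 4 lies strictly between 6 and 7. *)
Lemma cubic_multiplicities (ka kb : nat) :
  (ka + kb <= 4)%N -> lp *+ ka + lm *+ kb = 1 -> ka = 1%N /\ kb = 1%N.
Proof.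
have /andP [sqrt37_gt6 sqrt37_lt7] := sqrt37_bounds.
case: ka => [|[|[|[|[|ka]]]]]; case: kb => [|[|[|[|[|kb]]]]] //= kab; try lia.
all: move=> eq1; exfalso; lra.
Qed.

Lemma lp_add_lm : lp + lm = 1.
Proof. lra. Qed.

Lemma lp_mul_lm : lp * lm = 27 / 256.
Proof.
have sq : Num.sqrt (37 : R) ^+ 2 = 37 by rewrite sqr_sqrtr // ler0n.
nra.
Qed.

Lemma lp_lm_distinct : [&& lp != 0, lm != 0 & lp != lm].
Proof.
have /andP [sqrt37_gt6 sqrt37_lt7] := sqrt37_bounds.
by apply/and3P; split; apply/eqP => ?; lra.
Qed.

Lemma uniq_0_lp_lm : uniq [:: 0; lp%:C; lm%:C].
Proof.
rewrite /= !inE !(inj_eq (@complexI R)) !negb_or !(eq_sym 0) !andbT.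
by rewrite -andbA lp_lm_distinct.
Qed.

Lemma vn_entropy_cubic n (A : 'M[C]_n.+1) : (n < 4)%N -> \tr A = 1 ->
  A *m (A *m A - A + (27 / 256)%:M) = 0 -> vn_entropy A = lemma3_value R.
Proof.
move=> n_lt4 trA A_cubic.
have A_r : {subset eigenvalues A <= [:: 0; lp%:C; lm%:C]}.
  apply: eigenvalues_sub_roots; rewrite big_cons rmorphM /= horner_mx_XsubC2.
  rewrite -rmorphD -rmorphM lp_add_lm lp_mul_lm rmorph1 scale1r fmorph_div !rmorph_nat.
  by rewrite polyC0 subr0 horner_mx_X -mulmxE.
set ka := count_mem lp%:C (eigenvalues A); set kb := count_mem lm%:C (eigenvalues A).
have ka_kb_le4 : (ka + kb <= 4)%N.
  have := sum_count_mem (fun=> 1%N) uniq_0_lp_lm A_r.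
  rewrite sum1_size size_eigenvalues !big_cons big_nil /= !natn -/ka -/kb; lia.
have [ka1 kb1] : ka = 1%N /\ kb = 1%N.
  apply: cubic_multiplicities => //; apply: (@complexI R); rewrite rmorphD !rmorphMn rmorph1.
  by rewrite -trA (mxtrace_count uniq_0_lp_lm A_r) !big_cons big_nil addr0.
have /and3P [lp_neq0 lm_neq0 _] := lp_lm_distinct.
rewrite (vn_entropy_count uniq_0_lp_lm A_r) !big_cons big_nil -/ka -/kb ka1 kb1 /=.
rewrite /xlog2x (negbTE lp_neq0) (negbTE lm_neq0) /lemma3_value; ring.
Qed.

Lemma vn_entropy_cubic_real n (M : 'M[R]_n.+1) : (n < 4)%N -> \tr M = 1 ->
  M *m (M *m M - M + (27 / 256)%:M) = 0 ->
  vn_entropy (map_mx (real_complex R) M) = lemma3_value R.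
Proof.
move=> n_lt4 trM M_cubic; apply: vn_entropy_cubic => //.
  rewrite /mxtrace -(rmorph1 (real_complex R)) -trM rmorph_sum.
  by apply: eq_bigr => i; rewrite mxE.
have -> : 27 / 256 = (27 / 256 : R)%:C by rewrite fmorph_div !rmorph_nat.
by rewrite -map_mxM -map_mxB -map_scalar_mx -map_mxD -map_mxM M_cubic map_mx0.
Qed.

End Entropy.

Section PureStateDiscord.
Variables (R : realType) (p q : nat).
Local Notation C := R[i].

Lemma sum_mxtens_index (V : nmodType) (F : 'I_(p * q) -> V) :
  \sum_k F k = \sum_(i < p) \sum_(j < q) F (mxtens_index (i, j)).
Proof.
rewrite pair_big /= (reindex (@mxtens_index p q)) /=; last first.
  by exists (@mxtens_unindex p q) => x _; rewrite ?mxtens_indexK ?mxtens_unindexK.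
by apply: eq_bigr => -[i j] _.
Qed.

Lemma mxtrace_ptrace_X (M : 'M[C]_(p * q)) : \tr (ptrace_X M) = \tr M.
Proof.
rewrite /mxtrace (sum_mxtens_index (fun k => M k k)) exchange_big /=.
by apply: eq_bigr => j _; rewrite mxE.
Qed.

Definition amplitude_mx (psi : 'cV[C]_(p * q)) : 'M[C]_(p, q) :=
  \matrix_(i, j) psi (mxtens_index (i, j)) 0.

Lemma ptrace_X_meas_pure (E : 'M[C]_p) (psi : 'cV[C]_(p * q)) :
  ptrace_X (meas_op E (psi *m dagger psi)) =
  (amplitude_mx psi)^T *m E^T *m map_mx Num.conj (amplitude_mx psi).
Proof.
apply/matrixP => j j'; rewrite /meas_op mulmxA !mxE; apply: eq_bigr => i _.
rewrite mxE big_ord1 [dagger _ _ _]mxE !mxE !mulr_suml sum_mxtens_index.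
apply: eq_bigr => k _; rewrite (bigD1 j) //= big1 => [|l /negbTE l_neq_j].
  by rewrite tensmxE !mxE eqxx mulr1 addr0 [E i k * _]mulrC.
by rewrite tensmxE mxE (eq_sym j) l_neq_j mulr0 !mul0r.
Qed.

Lemma psd_ptrace_X_meas_pure (E : 'M[C]_p) (psi : 'cV[C]_(p * q)) :
  psd E -> psd (ptrace_X (meas_op E (psi *m dagger psi))).
Proof.
move=> E_psd; rewrite ptrace_X_meas_pure.
have -> : (amplitude_mx psi)^T = dagger (map_mx Num.conj (amplitude_mx psi)).
  by apply/matrixP => i j; rewrite !mxE conjCK.
exact/psd_dagger_mul/psd_trmx.
Qed.

Lemma post_state_density (E : 'M[C]_p) (rho : 'M[C]_(p * q)) :
  psd (ptrace_X (meas_op E rho)) -> meas_prob E rho != 0 ->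
  psd (post_state E rho) /\ \tr (post_state E rho) = 1.
Proof.
rewrite /post_state /meas_prob -mxtrace_ptrace_X => M_psd prob_neq0.
have [trM trM_ge0] := complex_ge0_real (psd_mxtrace_ge0 M_psd).
split; first by apply: psd_scale; rewrite ?invr_ge0.
by rewrite mxtraceZ -{2}trM -rmorphM mulVf.
Qed.

Lemma avg_cond_entropy_ge0 k (E : 'I_k -> 'M[C]_p) (rho : 'M[C]_(p * q)) :
  (forall a, psd (ptrace_X (meas_op (E a) rho))) -> 0 <= avg_cond_entropy E rho.
Proof.
move=> M_psd; apply: sumr_ge0 => a _.
have prob_ge0 : 0 <= meas_prob (E a) rho.
  rewrite /meas_prob -mxtrace_ptrace_X.
  by case: (complex_ge0_real (psd_mxtrace_ge0 (M_psd a))).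
have [->|prob_neq0] := eqVneq (meas_prob (E a) rho) 0; first by rewrite mul0r.
have [post_psd post_tr] := post_state_density (M_psd a) prob_neq0.
by rewrite mulr_ge0 // vn_entropy_ge0.
Qed.

Lemma povm_basis : povm (fun a : 'I_p => delta_mx a a : 'M[C]_p).
Proof.
split=> [a|]; first exact: psd_delta_mx.
apply/matrixP => i j; rewrite summxE !mxE (bigD1 i) //= big1 ?addr0 => [|a].
  by rewrite !mxE eqxx /= eq_sym.
by rewrite mxE eq_sym => /negbTE ->.
Qed.

Lemma avg_cond_entropy_basis_pure (psi : 'cV[C]_(p * q)) :
  avg_cond_entropy (fun a : 'I_p => delta_mx a a) (psi *m dagger psi) = 0.
Proof.
apply: big1 => a _.
have [->|prob_neq0] := eqVneq (meas_prob (delta_mx a a) (psi *m dagger psi)) 0.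
  by rewrite mul0r.
have [_ post_tr] := post_state_density (psd_ptrace_X_meas_pure psi (psd_delta_mx a)) prob_neq0.
have post_rank1 : post_state (delta_mx a a) (psi *m dagger psi) =
    ((meas_prob (delta_mx a a) (psi *m dagger psi))^-1%:C *:
      ((amplitude_mx psi)^T *m (delta_mx a 0 : 'cV_p))) *m
    ((delta_mx 0 a : 'rV_p) *m map_mx Num.conj (amplitude_mx psi)).
  rewrite /post_state ptrace_X_meas_pure -scalemxAl trmx_delta.
  by rewrite -(mul_delta_mx (0 : 'I_1)) !mulmxA.
by rewrite post_rank1 vn_entropy_rank1 -post_rank1 post_tr xlog2x1 oppr0 mulr0.
Qed.

Lemma discord_pure (psi : 'cV[C]_(p * q)) : \tr (psi *m dagger psi) = 1 ->
  discord (psi *m dagger psi) = vn_entropy (ptrace_Y (psi *m dagger psi)).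
Proof.
move=> tr1; rewrite /discord (inf_eq_min (x := 0)).
- by rewrite add0r vn_entropy_rank1 tr1 xlog2x1 oppr0 subr0.
- exists p, (fun a => delta_mx a a).
  by rewrite avg_cond_entropy_basis_pure; split; first exact: povm_basis.
- move=> _ [k [E [[E_psd _] ->]]]; apply: avg_cond_entropy_ge0 => a.
  exact: psd_ptrace_X_meas_pure.
Qed.

End PureStateDiscord.

Lemma nat_of_qubit_labels : [/\ qA = 0%N :> nat, qB = 1%N :> nat & qC = 2%N :> nat].
Proof. by rewrite /qA /qB /qC !inordK. Qed.

Lemma ord3_cases (t : 'I_3) : [\/ t = qA, t = qB | t = qC].
Proof.
have [eA eB eC] := nat_of_qubit_labels.
by case: t => [[|[|[|//]]] ?]; [constructor 1 | constructor 2 | constructor 3];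
  apply: val_inj; rewrite /= ?eA ?eB ?eC.
Qed.

Definition bits_index (f : 'I_3 -> bool) : 'I_8 := inord (4 * f qA + 2 * f qB + f qC)%N.

Lemma eq_bits_index f g : f =1 g -> bits_index f = bits_index g.
Proof. by move=> fg; rewrite /bits_index !fg. Qed.

Lemma qbitK (k : 'I_8) : bits_index (qbit k) = k.
Proof.
have [eA eB eC] := nat_of_qubit_labels.
apply: ord_inj; rewrite /bits_index /qbit eA eB eC inordK.
  by case: k => [[|[|[|[|[|[|[|[|//]]]]]]]] ?].
by case: (odd _); case: (odd _); case: (odd _).
Qed.

Lemma bits_indexK (f : 'I_3 -> bool) : qbit (bits_index f) =1 f.
Proof.
have [eA eB eC] := nat_of_qubit_labels.
move=> t; rewrite /qbit /bits_index.
by case: (ord3_cases t) => ->; rewrite ?eA ?eB ?eC inordK;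
  case: (f qA); case: (f qB); case: (f qC).
Qed.

Lemma all_qbits (k : 'I_8) : [forall t, qbit k t] = (val k == 7%N).
Proof.
have -> : (val k == 7%N) = (k == bits_index (fun=> true)).
  by rewrite /bits_index -val_eqE /= inordK.
apply/forallP/eqP => [k_ones|-> t]; last exact: bits_indexK.
by rewrite -[k]qbitK; apply: eq_bits_index.
Qed.

Section QubitPermutation.
Variables (o : 'I_3 -> 'I_3) (o_inj : injective o).

Definition permuted_index (i : 'I_8) : 'I_8 := bits_index (qbit i \o invF o_inj).

Lemma qubit_match_permuted_index i k :
  [forall t, qbit k (o t) == qbit i t] = (k == permuted_index i).
Proof.
apply/forallP/eqP => [match_ik|-> t].
  rewrite -[k]qbitK; apply: eq_bits_index => u /=.
  by rewrite -{1}(f_invF o_inj u); apply/eqP.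
by rewrite bits_indexK /= invF_f.
Qed.

Lemma reorder_permuted_index (R : realType) (rho : 'M[R[i]]_8) :
  reorder o rho = \matrix_(i, j) rho (permuted_index i) (permuted_index j).
Proof.
apply/matrixP => i j; rewrite !mxE.
under eq_bigr => k _ do under eq_bigr => l _ do rewrite !qubit_match_permuted_index.
by rewrite pair_big /= -big_mkcond (big_pred1 (permuted_index i, permuted_index j)).
Qed.

Lemma permuted_index_eq7 i : (val (permuted_index i) == 7%N) = (val i == 7%N).
Proof.
rewrite -!all_qbits; apply/forallP/forallP => ones t.
  by have := ones (o t); rewrite bits_indexK /= invF_f.
by rewrite bits_indexK /= ones.
Qed.

End QubitPermutation.

Lemma qorder_inj (a b c : 'I_3) :
  uniq [:: a : nat; b : nat; c : nat] -> injective (qorder a b c).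
Proof.
have [eA eB eC] := nat_of_qubit_labels.
have [oA oB oC] : [/\ qorder a b c qA = a, qorder a b c qB = b & qorder a b c qC = c].
  by rewrite /qorder -!val_eqE /= eA eB eC.
rewrite /= !inE negb_or -andbA => /and3P [ab ac bc] t t'.
by case: (ord3_cases t) => ->; case: (ord3_cases t') => -> //;
  rewrite ?oA ?oB ?oC => ab'; move: ab ac bc; rewrite ab' ?eqxx ?andbF.
Qed.

Section ThreeQubitState.
Variable R : realType.

Definition amp3 (k : 'I_8) : R := if val k == 7%N then -5 else 1.

Lemma rho3E k l : rho3 R k l = (amp3 k * amp3 l / 32)%:C.
Proof.
rewrite /rho3 mxE big_ord1 !mxE -[Num.conj _]/(conjc _) conjc_real -rmorphM; congr (_%:C).
set s := Num.sqrt (2 : R).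
have s_neq0 : s != 0 by rewrite sqrtr_eq0 -ltNge ltr0n.
have -> : (32 : R) = 16 * (s * s) by rewrite -expr2 sqr_sqrtr ?ler0n //; lra.
rewrite /amp3; set x := (if _ == 7%N then _ else _); set y := (if _ == 7%N then _ else _).
by field.
Qed.

Lemma mxtrace_rho3 : \tr (rho3 R) = 1.
Proof.
rewrite /mxtrace; under eq_bigr => k _ do rewrite rho3E.
rewrite -rmorph_sum -(rmorph1 (real_complex R)); congr (_%:C).
by rewrite !big_ord_recr big_ord0 /= /amp3 /=; field.
Qed.

Definition rho_A3_real : 'M[R]_2 :=
  \matrix_(i, j) (nth 0 (nth [::] [:: [:: 4; -2]; [:: -2; 28]] i) j / 32).

Definition rho_A3B3_real : 'M[R]_4 :=
  \matrix_(i, j) (nth 0 (nth [::] [:: [:: 2; 2; 2; -4]; [:: 2; 2; 2; -4];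
                                      [:: 2; 2; 2; -4]; [:: -4; -4; -4; 26]] i) j / 32).

Lemma rho_A3E : rho_A3 R = map_mx (real_complex R) rho_A3_real.
Proof.
apply/matrixP => i i'; rewrite /rho_A3 /ptrace_Y !mxE.
under eq_bigr => j _ do rewrite rho3E.
rewrite -rmorph_sum; congr (_%:C); rewrite !big_ord_recr big_ord0 /= /amp3 /=.
by case: i => [[|[|//]] ?]; case: i' => [[|[|//]] ?] /=; field.
Qed.

Lemma rho_A3B3E : rho_A3B3 R = map_mx (real_complex R) rho_A3B3_real.
Proof.
apply/matrixP => i i'; rewrite /rho_A3B3 /ptrace_Y !mxE.
under eq_bigr => j _ do rewrite rho3E.
rewrite -rmorph_sum; congr (_%:C); rewrite !big_ord_recr big_ord0 /= /amp3 /=.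
by case: i => [[|[|[|[|//]]]] ?]; case: i' => [[|[|[|[|//]]]] ?] /=; field.
Qed.

Lemma vn_entropy_rho_A3 : vn_entropy (rho_A3 R) = lemma3_value R.
Proof.
rewrite rho_A3E; apply: vn_entropy_cubic_real => //.
  by rewrite /mxtrace !big_ord_recr big_ord0 !mxE /=; lra.
apply/matrixP => i j; rewrite [RHS]mxE.
do ![rewrite mxE | rewrite big_ord_recr | rewrite big_ord0].
by case: i => [[|[|//]] ?]; case: j => [[|[|//]] ?] /=; lra.
Qed.

Lemma vn_entropy_rho_A3B3 : vn_entropy (rho_A3B3 R) = lemma3_value R.
Proof.
rewrite rho_A3B3E; apply: vn_entropy_cubic_real => //.
  by rewrite /mxtrace !big_ord_recr big_ord0 !mxE /=; lra.
apply/matrixP => i j; rewrite [RHS]mxE.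
do ![rewrite mxE | rewrite big_ord_recr | rewrite big_ord0].
by case: i => [[|[|[|[|//]]]] ?]; case: j => [[|[|[|[|//]]]] ?] /=; lra.
Qed.

Lemma reorder_rho3 o : injective o -> reorder o (rho3 R) = rho3 R.
Proof.
move=> o_inj; rewrite (reorder_permuted_index o_inj); apply/matrixP => i j.
by rewrite mxE !rho3E /amp3 !permuted_index_eq7.
Qed.

End ThreeQubitState.

Theorem lemma3 (R : realType) :
  D_BC_A R = D_AC_B R /\ D_AC_B R = D_AB_C R /\ D_AB_C R = D_C_AB R /\
  D_C_AB R = D_B_AC R /\ D_B_AC R = D_A_BC R /\ D_A_BC R = lemma3_value R /\
  D_BC_A R = vn_entropy (rho_A3 R) /\ D_C_AB R = vn_entropy (rho_A3B3 R).
Proof.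
have D_A : @discord R 2 4 (rho3 R) = vn_entropy (rho_A3 R).
  by rewrite /rho3 discord_pure // mxtrace_rho3.
have D_AB : @discord R 4 2 (rho3 R) = vn_entropy (rho_A3B3 R).
  by rewrite /rho3 discord_pure // mxtrace_rho3.
have reorder_qorder (a b c : 'I_3) : uniq [:: a : nat; b : nat; c : nat] ->
    reorder (qorder a b c) (rho3 R) = rho3 R.
  by move=> abc; apply/reorder_rho3/qorder_inj.
have [eA eB eC] := nat_of_qubit_labels.
rewrite /D_BC_A /D_AC_B /D_AB_C /D_C_AB /D_B_AC /D_A_BC !reorder_qorder ?eA ?eB ?eC //.
rewrite D_A D_AB vn_entropy_rho_A3 vn_entropy_rho_A3B3.
by do !split.
Qed.
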